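(* Let $q$ be a prime power and $m\geq 2$. Let $\Phi(x)=\sum_{i=0}^{2m}c_ix^{q^i}\in\mathbb{F}_q[x]$ with $c_{2m}=1$, $c_i=-c_{2m-i}$ for $0\le i\le m$, and $c_m=0$. Let \[L(x)=\Phi(x)+t^qx^{q^{m+1}}-tx^{q^{m-1}}\in\mathbb{F}_q(t)[x],\] let $E$ be a splitting field of $L$ over $\mathbb{F}_q(t)$, $G$ its Galois group, and $V$ the space of roots of $L$ in $E$. Let $f\in\mathbb{F}_q[x]$ be the unique polynomial with $f(0)=0$ and $f^q-f=x^{q^m}\Phi(x)$. Then the function $Q:V\to E$ defined by \[Q(\alpha)=t\alpha^{q^m+q^{m-1}}+f(\alpha)\] takes values in $\mathbb{F}_q$ and is a nondegenerate $\mathbb{F}_q$-valued quadratic form on $V$ that is $G$-invariant.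
   Context: Such a polynomial $f$ exists and is unique (it is monic of degree $q^{m-1}(q^m+1)$). The roots of $L$ form a $2m$-dimensional $\mathbb{F}_q$-vector space $V$. A function $Q:V\to\mathbb{F}_q$ is a quadratic form if $Q(\lambda v)=\lambda^2Q(v)$ for $\lambda\in\mathbb{F}_q$ and $Q(u+w)=Q(u)+Q(w)+C(u,w)$ for a symmetric bilinear form $C$ (its polarization); $Q$ is nondegenerate if $C$ is nondegenerate. $G$-invariant means $Q(\sigma\alpha)=Q(\alpha)$ for all $\sigma\in G$, $\alpha\in V$. *)

From HB Require Import structures.
From mathcomp Require Import all_boot all_order all_algebra all_fingroup all_field.
From mathcomp Require Import fraction.
Set Implicit Arguments. Unset Strict Implicit. Unset Printing Implicit Defensive.
Import GRing.Theory.
Local Open Scope ring_scope.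

Notation ratfun F := {fraction {poly F}}.

Definition constF (F : fieldType) (a : F) : ratfun F := @FracField.tofrac _ (a%:P).

Definition tvar (F : fieldType) : ratfun F := @FracField.tofrac _ ('X : {poly F}).

Definition Phi (F : fieldType) (q m : nat) (c : nat -> F) : {poly F} :=
  \sum_(i < (2 * m).+1) c i *: 'X^(q ^ i).

Definition Lpoly (F : fieldType) (q m : nat) (c : nat -> F) : {poly ratfun F} :=
  map_poly (@constF F) (Phi q m c)
  + (tvar F ^+ q) *: 'X^(q ^ m.+1) - tvar F *: 'X^(q ^ m.-1).

Definition Qfun (F : fieldType) (E : fieldExtType (ratfun F)) (q m : nat)
    (f : {poly F}) (a : E) : E :=
  in_alg E (tvar F) * a ^+ (q ^ m + q ^ m.-1)
  + (map_poly (fun b => in_alg E (constF b)) f).[a].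

From HB Require Import structures.
From mathcomp Require Import all_boot all_order all_algebra all_fingroup all_field.
From mathcomp Require Import fraction all_solvable ring zify.
Set Implicit Arguments. Unset Strict Implicit. Unset Printing Implicit Defensive.
Import GRing.Theory.
Local Open Scope ring_scope.

(* Write a^[k] for a^(q^k), an F_q-linear map on any F_q-algebra.  The
   hypothesis on f gives Q(a)^q - Q(a) = a^[m] L(a), so Q takes values in F_q
   on the roots of L.  Since g |-> g^q - g is injective on polynomials
   vanishing at 0, a telescoping sum identifies
   f = sum_{i<m} -c_i sum_{k<m-i} x^[i+k] x^[m+k]; hence Q is a sum of
   products of two F_q-linear maps, i.e. an F_q-quadratic form, on the
   F_q-space V of roots of the linearized polynomial L.  For fixed u its polar
   form B(u, .) is a polynomial of degree at most q^(2m-1) whose coefficient of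
   x is u^[m]; since L' = c_0 = -1, L is separable with q^(2m) roots, so
   B(u, V) = 0 forces u = 0.  Finally Q and L have coefficients in F_q(t),
   which the Galois group fixes. *)

Section FiniteFieldPowers.
Variable F : finFieldType.
Local Notation q := #|F|.

Lemma card_finField_pnat p : p \in [pchar F] -> p.-nat q.
Proof.
move=> pF; have := abelem_pgroup (fin_ring_pchar_abelem pF).
by rewrite /pgroup cardsT.
Qed.

Lemma expf_card_expn k (x : F) : x ^+ (q ^ k) = x.
Proof. by elim: k => [|k IHk]; rewrite ?expr1 // expnSr exprM IHk expf_card. Qed.

Lemma card_expn_gt0 k : (0 < q ^ k)%N.
Proof. by rewrite expn_gt0 (ltnW (finNzRing_gt1 F)). Qed.

Lemma eqn_card_expn a b : (q ^ a == q ^ b)%N = (a == b).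
Proof. by rewrite eqn_exp2l // finNzRing_gt1. Qed.

Variables (R : comNzRingType) (emb : {rmorphism F -> R}).

Lemma natr_card_expn k : (0 < k)%N -> (q ^ k)%:R = 0 :> R.
Proof.
move=> k_gt0; have [p p_pr pF] := finPcharP F.
have [n q_pn] := p_natP (card_finField_pnat pF).
have n_gt0 : (0 < n)%N.
  by move: (finNzRing_gt1 F); rewrite q_pn; case: n {q_pn} => //; rewrite expn0.
rewrite -(rmorph_nat emb); apply/eqP; rewrite fmorph_eq0 -(dvdn_pcharf pF) q_pn -expnM.
by rewrite dvdn_exp // muln_gt0 n_gt0.
Qed.

Lemma frobeniusD k (x y : R) : (x + y) ^+ (q ^ k) = x ^+ (q ^ k) + y ^+ (q ^ k).
Proof.
have [p p_pr pF] := finPcharP F.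
apply: exprDn_pchar; rewrite (eq_pnat _ (pcharf_eq (rmorph_pchar emb pF))) pnatX.
by rewrite card_finField_pnat.
Qed.

Lemma expr_cardD (x y : R) : (x + y) ^+ q = x ^+ q + y ^+ q.
Proof. by have := frobeniusD 1 x y; rewrite expn1. Qed.

Lemma frobenius_sum k I (r : seq I) (P : pred I) (G : I -> R) :
  (\sum_(i <- r | P i) G i) ^+ (q ^ k) = \sum_(i <- r | P i) G i ^+ (q ^ k).
Proof.
by apply: (big_morph _ (frobeniusD k)); rewrite expr0n eqn0Ngt card_expn_gt0.
Qed.

Lemma frobeniusZ k l (x : R) : (emb l * x) ^+ (q ^ k) = emb l * x ^+ (q ^ k).
Proof. by rewrite exprMn -rmorphXn expf_card_expn. Qed.

End FiniteFieldPowers.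

Lemma frobenius_fixed_img (F : finFieldType) (L : idomainType)
    (emb : {rmorphism F -> L}) (x : L) :
  x ^+ #|F| = x -> exists b, x = emb b.
Proof.
move=> x_fixed; have := congr1 (map_poly emb) (finField_genPoly F).
rewrite rmorphB /= map_polyXn map_polyX rmorph_prod => genL.
have : root ('X^#|F| - 'X) x by rewrite rootE !hornerE x_fixed subrr.
rewrite genL; under eq_bigr do rewrite rmorphB /= map_polyX map_polyC.
rewrite -(big_map emb xpredT (fun z => 'X - z%:P)) root_prod_XsubC.
by case/mapP => b _ ->; exists b.
Qed.

Definition linearized (R : nzRingType) (q : nat) (p : {poly R}) : Prop :=
  forall n, p`_n != 0 -> exists k, n = (q ^ k)%N.

Section LinearizedPolynomials.
Variables (F : finFieldType) (R : comNzRingType) (emb : {rmorphism F -> R}).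
Local Notation q := #|F|.
Variable p : {poly R}.
Hypothesis p_lin : linearized q p.

Lemma horner_linearizedD x y : p.[x + y] = p.[x] + p.[y].
Proof.
rewrite !horner_coef -big_split /=; apply: eq_bigr => i _.
have [->|/p_lin[k ->]] := eqVneq p`_i 0; first by rewrite !mul0r addr0.
by rewrite (frobeniusD emb) mulrDr.
Qed.

Lemma horner_linearizedZ l x : p.[emb l * x] = emb l * p.[x].
Proof.
rewrite !horner_coef mulr_sumr; apply: eq_bigr => i _.
have [->|/p_lin[k ->]] := eqVneq p`_i 0; first by rewrite !mul0r mulr0.
by rewrite frobeniusZ mulrCA.
Qed.

Lemma deriv_linearized : p^`() = (p`_1)%:P.
Proof.
apply/polyP => i; rewrite coef_deriv coefC.
have [p_i0|/p_lin[[|k] iE]] := eqVneq p`_i.+1 0.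
- by case: i p_i0 => [|i] p_i0; rewrite p_i0 mul0rn.
- by move: iE; rewrite expn0 => -[->].
rewrite iE -mulr_natr (natr_card_expn emb) // mulr0.
by case: i iE => // /esym/eqP; rewrite -[X in _ == X](expn0 q) eqn_card_expn.
Qed.

End LinearizedPolynomials.

Section FrobeniusQuadraticForms.
Variables (F : finFieldType) (R : comNzRingType).
Local Notation q := #|F|.

Record frob_monomial := FrobMonomial { fm_coef : R; fm_exp1 : nat; fm_exp2 : nat }.

Definition frob_monomial_tuple j := (fm_coef j, fm_exp1 j, fm_exp2 j).
Lemma frob_monomial_tupleK :
  cancel frob_monomial_tuple (fun t => FrobMonomial t.1.1 t.1.2 t.2).
Proof. by case. Qed.
HB.instance Definition _ := Equality.copy frob_monomial (can_type frob_monomial_tupleK).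

Implicit Types (r : seq frob_monomial) (x u w : R).

Definition quad_form r x : R :=
  \sum_(j <- r) fm_coef j * (x ^+ (q ^ fm_exp1 j) * x ^+ (q ^ fm_exp2 j)).

Definition polar_form r u w : R :=
  \sum_(j <- r) fm_coef j * (u ^+ (q ^ fm_exp1 j) * w ^+ (q ^ fm_exp2 j)
                             + w ^+ (q ^ fm_exp1 j) * u ^+ (q ^ fm_exp2 j)).

Variable emb : {rmorphism F -> R}.

Lemma quad_formD r u w :
  quad_form r (u + w) = quad_form r u + quad_form r w + polar_form r u w.
Proof.
rewrite /quad_form /polar_form -!big_split /=; apply: eq_bigr => j _.
by rewrite !(frobeniusD emb); ring.
Qed.

Lemma quad_formZ r l x : quad_form r (emb l * x) = emb l ^+ 2 * quad_form r x.
Proof.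
rewrite /quad_form mulr_sumr; apply: eq_bigr => j _.
by rewrite !frobeniusZ; ring.
Qed.

Lemma polar_formZl r l u u' w :
  polar_form r (emb l * u + u') w = emb l * polar_form r u w + polar_form r u' w.
Proof.
rewrite /polar_form mulr_sumr -big_split /=; apply: eq_bigr => j _.
by rewrite !(frobeniusD emb) !frobeniusZ; ring.
Qed.

Definition polar_poly r u : {poly R} :=
  \sum_(j <- r) fm_coef j *: (u ^+ (q ^ fm_exp1 j) *: 'X^(q ^ fm_exp2 j)
                              + u ^+ (q ^ fm_exp2 j) *: 'X^(q ^ fm_exp1 j)).

Lemma horner_polar_poly r u w : (polar_poly r u).[w] = polar_form r u w.
Proof.
rewrite /polar_poly horner_sum; apply: eq_bigr => j _.
by rewrite !hornerE; ring.
Qed.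

Lemma coef_polar_poly r u i :
  (polar_poly r u)`_i = \sum_(j <- r) fm_coef j *
    (u ^+ (q ^ fm_exp1 j) *+ (i == q ^ fm_exp2 j)%N
     + u ^+ (q ^ fm_exp2 j) *+ (i == q ^ fm_exp1 j)%N).
Proof.
rewrite /polar_poly coef_sum; apply: eq_bigr => j _.
by rewrite coefZ coefD !coefZ !coefXn !mulr_natr.
Qed.

Lemma size_polar_poly r u n :
    all (fun j => (fm_exp1 j <= n) && (fm_exp2 j <= n))%N r ->
  (size (polar_poly r u) <= (q ^ n).+1)%N.
Proof.
move=> /allP r_le; apply/leq_sizeP => i lt_i; rewrite coef_polar_poly big1_seq // => j.
case/andP=> _ /r_le/andP[le1 le2].
have lt_exp a : (a <= n)%N -> (i == q ^ a)%N = false.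
  by move=> le_a; rewrite gtn_eqF // (leq_ltn_trans _ lt_i) // leq_exp2l ?finNzRing_gt1.
by rewrite !lt_exp // !mulr0n addr0 mulr0.
Qed.

End FrobeniusQuadraticForms.

Lemma polar_poly_eq0 (F : finFieldType) (L : idomainType) (r : seq (frob_monomial L))
    (u : L) (n : nat) (ws : seq L) :
    all (fun j => (fm_exp1 j <= n) && (fm_exp2 j <= n))%N r ->
    uniq ws -> (#|F| ^ n < size ws)%N ->
    (forall w, w \in ws -> polar_form F r u w = 0) ->
  polar_poly F r u = 0.
Proof.
move=> r_le ws_uniq ws_big ws_roots; apply/eqP; apply: contraTT ws_big => nz.
have ws_root : all (root (polar_poly F r u)) ws.
  by apply/allP => w /ws_roots w0; rewrite rootE horner_polar_poly w0.
by rewrite -leqNgt -ltnS (leq_trans (max_poly_roots nz ws_root ws_uniq)) ?size_polar_poly.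
Qed.

Lemma sum_nat_mirror (V : zmodType) m (g : nat -> V) :
  \sum_(0 <= i < (2 * m).+1) g i = \sum_(0 <= i < m) (g i + g (2 * m - i)%N) + g m.
Proof.
rewrite (@big_cat_nat _ _ _ m) //=; last by lia.
rewrite (@big_ltn _ _ _ m); last by lia.
rewrite big_split /= -!addrA; congr (_ + _); rewrite addrC; congr (_ + _).
rewrite -(add0n m.+1) big_addn big_nat_rev /=.
have -> : ((2 * m).+1 - m.+1 = m)%N by lia.
by apply: eq_big_nat => i /andP[_ lt_im]; congr g; lia.
Qed.

Lemma size_poly_expr_fixed (R : idomainType) (p : {poly R}) n :
  (1 < n)%N -> p ^+ n = p -> (size p <= 1)%N.
Proof.
move=> n_gt1 pn_p; have := size_exp p n; rewrite pn_p.
by case: (size p) => [|[|s]] //=; nia.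
Qed.

Lemma frobenius_difference_inj (F : finFieldType) (f g : {poly F}) :
  f ^+ #|F| - f = g ^+ #|F| - g -> f.[0] = g.[0] -> f = g.
Proof.
move=> eq_fg eq_fg0; apply/eqP; rewrite -subr_eq0; apply/eqP.
have d_fixed : (f - g) ^+ #|F| = f - g.
  have := expr_cardD (@polyC F) (f - g) g; rewrite subrK => fq.
  by apply: (addIr (g ^+ #|F|)); rewrite -fq -[f ^+ #|F|](subrK f) eq_fg; ring.
rewrite (size1_polyC (size_poly_expr_fixed (finNzRing_gt1 F) d_fixed)).
by rewrite -horner_coef0 hornerD hornerN eq_fg0 subrr.
Qed.

Section ExplicitF.
Variables (F : finFieldType) (m : nat) (c : nat -> F).
Local Notation q := #|F|.

Definition fpoly : {poly F} :=
  \sum_(0 <= i < m) (- c i) *: \sum_(0 <= k < m - i) 'X^(q ^ (i + k)) * 'X^(q ^ (m + k)).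

Hypotheses (csym : forall i, (i <= m)%N -> c i = - c (2 * m - i)%N) (cm : c m = 0).

Lemma fpoly_frobenius : fpoly ^+ q - fpoly = 'X^(q ^ m) * Phi q m c.
Proof.
have frobenius1_sum := frobenius_sum (@polyC F) 1; rewrite expn1 in frobenius1_sum.
rewrite /fpoly frobenius1_sum -sumrB /Phi -(big_mkord xpredT (fun i => c i *: 'X^(q ^ i))).
rewrite sum_nat_mirror cm scale0r addr0 mulr_sumr.
apply: eq_big_nat => i /andP[_ lt_im].
rewrite exprZn expf_card frobenius1_sum -scalerBr.
under eq_bigr => k _ do rewrite exprMn -!exprM -!expnSr -!addnS.
rewrite -sumrB telescope_sumr // subnKC ?(ltnW lt_im) // !addn0.
have -> : (m + (m - i) = 2 * m - i)%N by lia.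
by rewrite (csym (ltnW lt_im)) -!mul_polyC polyCN; ring.
Qed.

Lemma fpoly0 : fpoly.[0] = 0.
Proof.
rewrite horner_sum big1 // => i _; rewrite hornerZ horner_sum big1 ?mulr0 // => k _.
by rewrite hornerM hornerXn expr0n eqn0Ngt card_expn_gt0 mul0r.
Qed.

End ExplicitF.

Section QuadraticFormOnRoots.
Variables (F : finFieldType) (m : nat) (c : nat -> F) (E : splittingFieldType (ratfun F)).
Local Notation q := #|F|.
Hypotheses (m_ge2 : (2 <= m)%N) (c2m : c (2 * m)%N = 1)
  (csym : forall i, (i <= m)%N -> c i = - c (2 * m - i)%N) (cm : c m = 0).

Definition const_emb : {rmorphism F -> E} := in_alg E \o @FracField.tofrac _ \o polyC.
Local Notation emb := const_emb.
Local Notation T := (in_alg E (tvar F)).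
Local Notation LE := (map_poly (in_alg E) (Lpoly q m c)).

Lemma c0_eqN1 : c 0 = -1.
Proof. by rewrite csym // subn0 c2m. Qed.

Lemma coef_LE i : LE`_i =
  \sum_(k < (2 * m).+1 | (q ^ k == i)%N) emb (c k)
  + T ^+ q *+ (q ^ m.+1 == i)%N - T *+ (q ^ m.-1 == i)%N.
Proof.
rewrite coef_map /Lpoly /Phi coefB coefD coef_map_id0 ?rmorph0 // coef_sumMXn !coefZ !coefXn.
rewrite raddfB raddfD /= -[(constF _)%:A]/(emb _) rmorph_sum !mulr_natr -!scalerMnl.
by rewrite ![(i == _)%N]eq_sym -(rmorphXn (in_alg E)).
Qed.

Lemma LE_linearized : linearized q LE.
Proof.
move=> i; rewrite coef_LE.
have [/existsP[k /eqP <-]|/existsPn no_k] := boolP [exists k : 'I_(2 * m).+1, q ^ k == i]%N.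
  by exists k.
have [<-|_] := eqVneq (q ^ m.+1)%N i; first by exists m.+1.
have [<-|_] := eqVneq (q ^ m.-1)%N i; first by exists m.-1.
rewrite big_pred0 => [|k]; last exact/negbTE/no_k.
by rewrite add0r subrr eqxx.
Qed.

Lemma coef_LE_qpow n : LE`_(q ^ n) =
  (if (n < (2 * m).+1)%N then emb (c n) else 0) + T ^+ q *+ (m.+1 == n) - T *+ (m.-1 == n).
Proof.
rewrite coef_LE !eqn_card_expn; under eq_bigl do rewrite eqn_card_expn.
by rewrite (big_ord1_eq _ (fun k => emb (c k))).
Qed.

Lemma coef_LE1 : LE`_1 = -1.
Proof.
have m1_neq0 : (m.-1 == 0)%N = false by lia.
by rewrite -(expn0 q) coef_LE_qpow ltn0Sn c0_eqN1 rmorphN1 m1_neq0 addr0 subr0.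
Qed.

Lemma size_LE : size LE = (q ^ (2 * m)).+1.
Proof.
apply/anti_leq/andP; split.
  apply/leq_sizeP => i lt_i; rewrite coef_LE.
  have qpow_neq k : (k <= 2 * m)%N -> (q ^ k == i)%N = false.
    by move=> le_k; rewrite ltn_eqF // (leq_ltn_trans _ lt_i) // leq_exp2l ?finNzRing_gt1.
  rewrite big_pred0 => [|k]; last by rewrite qpow_neq // -ltnS.
  rewrite !qpow_neq; try lia.
  by rewrite add0r !mulr0n subrr.
rewrite ltnNge; apply/negP => /leq_sizeP/(_ _ (leqnn _)).
have [top1 top2] : (m.+1 == 2 * m)%N = false /\ (m.-1 == 2 * m)%N = false by lia.
by rewrite coef_LE_qpow ltnSn c2m rmorph1 top1 top2 addr0 subr0 => /eqP; rewrite oner_eq0.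
Qed.

Lemma LE_separable : separable_poly LE.
Proof.
rewrite unlock /separable_poly (deriv_linearized emb LE_linearized) coef_LE1 -alg_polyC.
by rewrite coprimepZr ?coprimep1 // oppr_eq0 oner_eq0.
Qed.

Lemma LE_roots : splittingFieldFor 1%AS LE fullv ->
  exists ws : seq E, [/\ uniq ws, size ws = (q ^ (2 * m))%N & forall w, w \in ws -> root LE w].
Proof.
move=> [ws LE_ws _]; exists ws; split.
- by rewrite -separable_prod_XsubC -(eqp_separable LE_ws) LE_separable.
- by have := eqp_size LE_ws; rewrite size_LE size_prod_XsubC => -[].
- by move=> w w_ws; rewrite (eqp_root LE_ws) root_prod_XsubC.
Qed.

Lemma gal_in_alg (s : gal_of {:E}) (a : ratfun F) : s (in_alg E a) = in_alg E a.
Proof. by rewrite linearZ /= rmorph1. Qed.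

Lemma gal_horner_map (R : nzRingType) (g : {rmorphism R -> E}) (s : gal_of {:E}) p x :
  (forall a, s (g a) = g a) -> s (map_poly g p).[x] = (map_poly g p).[s x].
Proof.
by move=> s_fix; rewrite -horner_map -map_poly_comp; congr _.[_]; apply: eq_map_poly.
Qed.

Lemma root_LE_gal (s : gal_of {:E}) a : root LE a -> root LE (s a).
Proof.
by rewrite !rootE -gal_horner_map => [/eqP->|b]; rewrite ?rmorph0 ?gal_in_alg.
Qed.

Lemma root_LED u w : root LE u -> root LE w -> root LE (u + w).
Proof.
by rewrite !rootE (horner_linearizedD emb LE_linearized) => /eqP-> /eqP->; rewrite addr0.
Qed.

Lemma root_LEZ l u : root LE u -> root LE (emb l * u).
Proof.
by rewrite !rootE (horner_linearizedZ emb LE_linearized) => /eqP->; rewrite mulr0.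
Qed.

Lemma horner_LE x :
  LE.[x] = (map_poly emb (Phi q m c)).[x] + T ^+ q * x ^+ (q ^ m.+1) - T * x ^+ (q ^ m.-1).
Proof.
rewrite /Lpoly rmorphB rmorphD /= !map_polyZ !map_polyXn -map_poly_comp.
by rewrite !hornerE rmorphXn.
Qed.

Lemma map_constF (p : {poly F}) : map_poly (fun b => in_alg E (constF b)) p = map_poly emb p.
Proof. exact: eq_map_poly. Qed.

Lemma Qfun_frobenius (f : {poly F}) x : f ^+ q - f = 'X^(q ^ m) * Phi q m c ->
  Qfun q m f x ^+ q = Qfun q m f x + x ^+ (q ^ m) * LE.[x].
Proof.
move=> f_frob; have fq : f ^+ q = f + 'X^(q ^ m) * Phi q m c by rewrite -f_frob addrC subrK.
rewrite /Qfun map_constF horner_LE (expr_cardD emb) -horner_exp -rmorphXn fq.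
rewrite rmorphD rmorphM /= map_polyXn hornerD hornerM hornerXn.
rewrite exprMn -exprM mulnDl -!expnSr prednK ?(ltnW m_ge2) // !exprD; ring.
Qed.

Definition Q_monomials : seq (frob_monomial E) :=
  FrobMonomial T m m.-1 :: [seq FrobMonomial (emb (- c i)) (i + k) (m + k)
                             | i <- index_iota 0 m, k <- index_iota 0 (m - i)].

Lemma Qfun_fpoly x : Qfun q m (fpoly m c) x = quad_form F Q_monomials x.
Proof.
rewrite /Qfun map_constF /quad_form big_cons big_allpairs_dep exprD; congr (_ + _).
rewrite /fpoly rmorph_sum horner_sum; apply: eq_bigr => i _.
rewrite -mul_polyC rmorphM /= map_polyC hornerM hornerC rmorph_sum horner_sum mulr_sumr.
by apply: eq_bigr => k _; rewrite rmorphM /= !map_polyXn hornerM !hornerXn.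
Qed.

Lemma Q_monomials_exp_le :
  all (fun j => (fm_exp1 j <= (2 * m).-1) && (fm_exp2 j <= (2 * m).-1))%N Q_monomials.
Proof.
apply/allP => _ /predU1P[-> /=|/allpairsPdep[i [k [i_in k_in ->]]] /=]; first lia.
by move: i_in k_in; rewrite !mem_index_iota; lia.
Qed.

Lemma coef1_polar_Q_monomials u : (polar_poly F Q_monomials u)`_1 = u ^+ (q ^ m).
Proof.
have one_qpow n : (1 == q ^ n)%N = (n == 0)%N.
  by rewrite -[X in X == _](expn0 q) eqn_card_expn eq_sym.
have [m1_neq0 m_neq0] : (m.-1 == 0)%N = false /\ (m == 0)%N = false by lia.
have mk_neq0 k : (m + k == 0)%N = false by rewrite addn_eq0 m_neq0.
have m_gt0 : (0 < m)%N by lia.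
rewrite coef_polar_poly big_cons big_allpairs_dep big_ltn // subn0 big_ltn //.
(* Unfold the monomial projections and the monoid-law view of [+] that the
   bigop lemmas leave behind. *)
cbn [fm_coef fm_exp1 fm_exp2 Algebra.Algebra_add__canonical__Monoid_Law Monoid.Law.sort].
rewrite !one_qpow m1_neq0 m_neq0 mk_neq0 !mulr0n addr0 mulr0 add0r addn0 eqxx mulr1n.
rewrite c0_eqN1 opprK rmorph1 mul1r !big1_seq ?addr0 ?add0r // => [i|k] /andP[_].
- rewrite mem_index_iota => /andP[i_gt0 _]; rewrite big1_seq // => k _.
  by rewrite !one_qpow mk_neq0 addn_eq0 (gtn_eqF i_gt0) !mulr0n addr0 mulr0.
- rewrite mem_index_iota => /andP[k_gt0 _].
  by rewrite !one_qpow mk_neq0 add0n (gtn_eqF k_gt0) !mulr0n addr0 mulr0.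
Qed.

Variable f : {poly F}.
Hypotheses (f0 : f.[0] = 0) (f_frob : f ^+ q - f = 'X^(q ^ m) * Phi q m c).
Local Notation Q := (Qfun q m f).

Lemma f_eq_fpoly : f = fpoly m c.
Proof. by apply: frobenius_difference_inj; rewrite ?f_frob ?fpoly_frobenius ?f0 ?fpoly0. Qed.

Lemma Qfun_gal (s : gal_of {:E}) x : s (Q x) = Q (s x).
Proof.
rewrite /Qfun map_constF rmorphD rmorphM rmorphXn /= gal_in_alg gal_horner_map // => b.
exact: gal_in_alg.
Qed.

Definition Qval (a : E) : F := odflt 0 [pick b | Q a == emb b].

Lemma QvalE a : root LE a -> Q a = emb (Qval a).
Proof.
move=> a_root; rewrite /Qval; case: pickP => [b /eqP //|no_b].
have Qa_fixed : Q a ^+ q = Q a by rewrite Qfun_frobenius // (rootP a_root) mulr0 addr0.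
have [b Qa] := frobenius_fixed_img emb Qa_fixed.
by move: (no_b b); rewrite Qa eqxx.
Qed.

Lemma QvalZ l a : root LE a -> Qval (emb l * a) = l ^+ 2 * Qval a.
Proof.
move=> a_root; apply: (fmorph_inj emb).
by rewrite rmorphM rmorphXn -!QvalE ?root_LEZ // f_eq_fpoly !Qfun_fpoly (quad_formZ emb).
Qed.

Definition Cval (u w : E) : F := Qval (u + w) - Qval u - Qval w.

Lemma CvalE u w : root LE u -> root LE w -> emb (Cval u w) = polar_form F Q_monomials u w.
Proof.
move=> u_root w_root; rewrite !rmorphB -!QvalE ?root_LED //.
by rewrite f_eq_fpoly !Qfun_fpoly (quad_formD emb); ring.
Qed.

Lemma CvalZl l u u' w : root LE u -> root LE u' -> root LE w ->
  Cval (emb l * u + u') w = l * Cval u w + Cval u' w.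
Proof.
move=> u_root u'_root w_root; apply: (fmorph_inj emb).
by rewrite CvalE ?root_LED ?root_LEZ // rmorphD rmorphM !CvalE // (polar_formZl emb).
Qed.

Lemma Cval_nondegenerate u : splittingFieldFor 1%AS LE fullv -> root LE u ->
  (forall w, root LE w -> Cval u w = 0) -> u = 0.
Proof.
move=> LE_split u_root u_orth; have [ws [ws_uniq ws_size ws_roots]] := LE_roots LE_split.
have : polar_poly F Q_monomials u = 0.
  apply: (polar_poly_eq0 Q_monomials_exp_le ws_uniq) => [|w w_ws].
    by rewrite ws_size ltn_exp2l ?finNzRing_gt1 //; lia.
  have w_root := ws_roots w w_ws.
  by rewrite -CvalE // u_orth // rmorph0.
move=> /(congr1 (fun p : {poly E} => p`_1)); rewrite coef1_polar_Q_monomials coef0 => /eqP.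
by rewrite expf_eq0 => /andP[_ /eqP].
Qed.

Lemma Qval_gal (s : gal_of {:E}) a : root LE a -> Qval (s a) = Qval a.
Proof.
move=> a_root; apply: (fmorph_inj emb).
by rewrite -!QvalE ?root_LE_gal // -Qfun_gal QvalE // gal_in_alg.
Qed.

End QuadraticFormOnRoots.

Theorem theorem4p8 (F : finFieldType) (m : nat) (c : nat -> F)
  (E : splittingFieldType (ratfun F)) (f : {poly F}) :
  let q := #|F| in
  let embF := fun a : F => in_alg E (constF a) in
  let LE := map_poly (in_alg E) (Lpoly q m c) in
  let V := fun a : E => root LE a in
  let Q := Qfun q m f in
  (2 <= m)%N ->
  c (2 * m)%N = 1 ->
  (forall i, (i <= m)%N -> c i = - c (2 * m - i)%N) ->
  c m = 0 ->
  splittingFieldFor 1%AS LE fullv ->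
  f.[0] = 0 ->
  f ^+ q - f = 'X^(q ^ m) * Phi q m c ->
  exists Q0 : E -> F,
    (* Q takes values in F_q *)
    (forall a, V a -> Q a = embF (Q0 a)) /\
    (* Q0 is a quadratic form on V *)
    (forall (l : F) a, V a -> Q0 (embF l * a) = l ^+ 2 * Q0 a) /\
    (exists C : E -> E -> F,
       (forall u w, V u -> V w -> Q0 (u + w) = Q0 u + Q0 w + C u w) /\
       (forall u w, V u -> V w -> C u w = C w u) /\
       (forall (l : F) u u' w, V u -> V u' -> V w ->
          C (embF l * u + u') w = l * C u w + C u' w) /\
       (* nondegenerate *)
       (forall u, V u -> (forall w, V w -> C u w = 0) -> u = 0)) /\
    (* G-invariant, G = Gal(E / F_q(t)) *)
    (forall (s : gal_of {:E}) a, s \in 'Gal({:E} / 1%AS)%g -> V a ->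
       Q0 (s a) = Q0 a).
Proof.
move=> q embF LE V Q m_ge2 c2m csym cm LE_split f0 f_frob.
exists (Qval m f); split; [|split; [|split]].
- by move=> a; apply: QvalE.
- by move=> l a; apply: QvalZ.
- exists (Cval m f); split; [|split; [|split]].
  + by move=> u w _ _; rewrite /Cval; ring.
  + by move=> u w _ _; rewrite /Cval [w + u]addrC; ring.
  + by move=> l u u' w; apply: CvalZl.
  + by move=> u; apply: Cval_nondegenerate.
- by move=> s a _; apply: Qval_gal.
Qed.
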